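(* In the $\ell$-variant cup game, if at some time there is a cup of fill $k$ for some integer $k\ge3$, then at that time there is a cup of fill $k-1$ or a cup of fill $k-2$.
   Context: The $\ell$-variant cup game on $n$ cups ($\ell$ a positive integer): $n$ cups with integer fills, all initially $0$. In each round the player chooses an integer $k'\ge0$ and an integer $q\ge1$ such that at least $2q$ cups have fill exactly $k'$. Among these cups, exactly $q$ are raised to $k'+1$; if $k'$ is a multiple of $\ell$ the other $q$ stay at $k'$, and otherwise $q$ other such cups are lowered to $k'-1$. *)

From mathcomp Require Import all_boot.
Set Implicit Arguments. Unset Strict Implicit. Unset Printing Implicit Defensive.

(* Fills are always nonnegative in this game (a cup of fill 0 is never
   lowered since 0 is a multiple of l), so nat is used. *)
Definition config (n : nat) := {ffun 'I_n -> nat}.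

Definition init_config (n : nat) : config n := [ffun _ => 0].

Definition cup_step (l n : nat) (c c' : config n) : Prop :=
  exists (k' q : nat) (U D : {set 'I_n}),
    1 <= q /\
    2 * q <= #|[set i | c i == k']| /\
    (forall i, i \in U -> c i = k') /\
    (forall i, i \in D -> c i = k') /\
    #|U| = q /\
    [disjoint U & D] /\
    (if l %| k' then D = set0 else #|D| = q) /\
    (forall i, c' i = if i \in U then k'.+1
                      else if i \in D then k'.-1 else c i).

Inductive reachable (l n : nat) : config n -> Prop :=
| reach_init : reachable l (init_config n)
| reach_step c c' : reachable l c -> cup_step l c c' -> reachable l c'.

From mathcomp Require Import all_boot.
From mathcomp Require Import zify.

Set Implicit Arguments.
Unset Strict Implicit.
Unset Printing Implicit Defensive.

(* The property "every fill v >= 3 is accompanied by fill v-1 or v-2" is an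
   invariant of the game.  A round at level k only moves cups of fill k and
   only creates the fills k+1 and k-1; afterwards k+1 is present (a raised
   cup) and so is k or k-1 (a cup left at k, or a lowered one), which repairs
   any instance of the property that the round could break. *)

Definition has_fill {n : nat} (c : config n) (v : nat) : Prop :=
  exists i, c i = v.

Definition gap_free {n : nat} (c : config n) : Prop :=
  forall v, 3 <= v -> has_fill c v -> has_fill c (v - 1) \/ has_fill c (v - 2).

Lemma gap_free_init (n : nat) : gap_free (init_config n).
Proof. by move=> v v3 [i]; rewrite ffunE; lia. Qed.

Section CupStep.

Variables (l n : nat) (c c' : config n) (k q : nat) (U D : {set 'I_n}).
Hypotheses (q_gt0 : 0 < q) (card_level : 2 * q <= #|[set i | c i == k]|).
Hypotheses (U_level : forall i, i \in U -> c i = k)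
           (D_level : forall i, i \in D -> c i = k).
Hypotheses (card_U : #|U| = q) (disj_UD : [disjoint U & D]).
Hypothesis D_spec : if l %| k then D = set0 else #|D| = q.
Hypothesis step_fill :
  forall i, c' i = if i \in U then k.+1 else if i \in D then k.-1 else c i.

Lemma fill_unmoved i : c i != k -> c' i = c i.
Proof.
move=> cik; rewrite step_fill.
case: ifP => [/U_level|_]; first by move/eqP; rewrite (negbTE cik).
by case: ifP => [/D_level/eqP|_] //; rewrite (negbTE cik).
Qed.

Lemma has_fill_level : has_fill c k.
Proof.
have /card_gt0P [i] : 0 < #|[set i | c i == k]| by lia.
by rewrite inE => /eqP; exists i.
Qed.

Lemma has_fill_step_succ : has_fill c' k.+1.
Proof.
have /card_gt0P [i iU] : 0 < #|U| by rewrite card_U.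
by exists i; rewrite step_fill iU.
Qed.

Lemma has_fill_step_level_or_pred : has_fill c' k \/ has_fill c' k.-1.
Proof.
case: (l %| k) D_spec => [D0 | card_D].
- have /subsetPn [i] : ~~ ([set i | c i == k] \subset U).
    by apply/negP => /subset_leq_card; rewrite card_U; lia.
  rewrite inE => /eqP cik iU; left; exists i.
  by rewrite step_fill (negbTE iU) D0 inE.
- have /card_gt0P [i iD] : 0 < #|D| by rewrite card_D.
  right; exists i.
  by rewrite step_fill (disjointFl disj_UD iD) iD.
Qed.

Lemma has_fill_step_keep v : v != k -> has_fill c v -> has_fill c' v.
Proof.
by move=> vk [i cv]; exists i; rewrite fill_unmoved cv.
Qed.

Lemma has_fill_stepE v :
  has_fill c' v -> [\/ has_fill c v, v = k.+1 | v = k.-1].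
Proof.
move=> [i]; rewrite step_fill.
case: ifP => _; first by move<-; apply: Or32.
by case: ifP => _ <-; [apply: Or33 | apply: Or31; exists i].
Qed.

Lemma gap_free_step : gap_free c -> gap_free c'.
Proof.
move=> gap v v3 /has_fill_stepE [cv | -> | vE].
- case: (gap v v3 cv) => cw.
  + case: (eqVneq (v - 1) k) => [e | ne]; last by left; apply: has_fill_step_keep.
    by rewrite e (_ : v - 2 = k.-1); [apply: has_fill_step_level_or_pred | lia].
  + case: (eqVneq (v - 2) k) => [e | ne]; last by right; apply: has_fill_step_keep.
    by left; rewrite (_ : v - 1 = k.+1); [apply: has_fill_step_succ | lia].
- by rewrite !subSS subn0 subn1; apply: has_fill_step_level_or_pred.
- have k_ge3 : 3 <= k by lia.
  case: (gap k k_ge3 has_fill_level) => ck.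
  + have cv : has_fill c v by rewrite vE -subn1.
    by case: (gap v v3 cv) => cw; [left | right]; apply: has_fill_step_keep => //; apply/eqP; lia.
  + by left; rewrite (_ : v - 1 = k - 2); [apply: has_fill_step_keep => //; apply/eqP | ]; lia.
Qed.

End CupStep.

Lemma gap_free_cup_step (l n : nat) (c c' : config n) :
  gap_free c -> cup_step l c c' -> gap_free c'.
Proof.
by move=> gap [k [q [U [D [q0 [cl [Ul [Dl [cU [dUD [Ds fill]]]]]]]]]]];
  exact: (gap_free_step q0 cl Ul Dl cU dUD Ds fill gap).
Qed.

Lemma gap_free_reachable (l n : nat) (c : config n) :
  reachable l c -> gap_free c.
Proof.
by elim=> [|c0 c1 _ gap0 step]; [apply: gap_free_init | apply: gap_free_cup_step step].
Qed.

Theorem proposition6p5 (l n : nat) (c : config n) (i : 'I_n) (k : nat) :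
  0 < l -> reachable l c -> 3 <= k -> c i = k ->
  exists j : 'I_n, c j = k - 1 \/ c j = k - 2.
Proof.
move=> _ /gap_free_reachable gap k3 cik.
by case: (gap k k3 (ex_intro _ i cik)) => [[j cj] | [j cj]]; exists j; [left | right].
Qed.
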